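(* Let $k$ and $n$ be natural numbers. Then $$A_k(n)=\tfrac12 D_k(n+1),$$ where $A_k(n):=\tfrac12\big(P_1(d,n)+P'_{k-1}(d,n)+P_2(d,n)+P''_{k-1}(d,n)\big)$.
   Context: The partition functions are defined as follows. - $P_1(d,n)$ is the number of partitions of $n$ into distinct parts whose smallest part exceeds $1$. - $P_2(d,n)$ is the number of partitions of $n$ into distinct parts for which the difference between the two smallest parts is at least $2$ (a partition with a single part counts vacuously). - $P'_{k-1}(d,n)$ is the number of partitions of $n$ in which all parts are distinct except that the smallest part is $1$ with multiplicity $k-1$. - $P''_{k-1}(d,n)$ is the number of partitions of $n$ into distinct parts except that the second smallest part appears with multiplicity $k-1$, where the difference between the two smallest parts is $1$. - $D_k(n)$ is the number of partitions of $n$ into non-negative parts (the part $0$ allowed) in which the smallest part appears exactly $k$ times and no other part is repeated, with $D_k(0)=1$. Its generating function is $\sum_{n\ge0}D_k(n)q^n=\sum_{m\ge0}q^{mk}(-q^{m+1};q)_\infty$. *)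

From mathcomp Require Import all_boot all_order all_algebra.
Set Implicit Arguments. Unset Strict Implicit. Unset Printing Implicit Defensive.
Import GRing.Theory Num.Theory.

(* A partition of n (into positive parts) is encoded as an n-tuple of
   elements of 'I_n.+1, sorted nonincreasingly, summing to n; the zero
   entries are padding.  This is a bijection with partitions of n
   (a partition of n has at most n parts, each at most n). *)
Definition is_ptn n (t : n.-tuple 'I_n.+1) : bool :=
  sorted geq (map val t) && (sumn (map val t) == n).

Definition parts_of n (t : n.-tuple 'I_n.+1) : seq nat :=
  [seq val x | x <- t & 0 < val x].

Definition ptn_count (n : nat) (P : seq nat -> bool) : nat :=
  #|[set t : n.-tuple 'I_n.+1 | is_ptn t && P (parts_of t)]|.

(* In all predicates below, p is a nonincreasing list of positive parts. *)

Definition P1_pred (p : seq nat) : bool := uniq p && all (fun x => 1 < x) p.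

Definition P2_pred (p : seq nat) : bool :=
  uniq p && (if rev p is a :: b :: _ then 2 <= b - a else true).

Definition P'_pred (k : nat) (p : seq nat) : bool :=
  (count_mem 1 p == k.-1) &&
  all (fun x => (x == 1) || (count_mem x p <= 1)) p.

Definition P''_pred (k : nat) (p : seq nat) : bool :=
  if rev (undup p) is s1 :: s2 :: _ then
    (s2 == s1 + 1) && (count_mem s1 p == 1) && (count_mem s2 p == k.-1) &&
    all (fun x => (x == s2) || (count_mem x p <= 1)) p
  else false.

Definition P1 (n : nat) : nat := ptn_count n P1_pred.
Definition P2 (n : nat) : nat := ptn_count n P2_pred.
Definition P' (k n : nat) : nat := ptn_count n (P'_pred k).
Definition P'' (k n : nat) : nat := ptn_count n (P''_pred k).

(* D_k(n): partitions of n into nonnegative parts (0 allowed), where the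
   smallest part appears exactly k times and no other part is repeated.
   Such a partition is a pair (z, t): z copies of the part 0 together with
   a partition t of n into positive parts.  In any counted partition the
   number z of zeros is either 0 or k (if 0 occurs it is the smallest part),
   so restricting z to 'I_k.+1 loses nothing. *)
Definition D_pred (k : nat) (q : seq nat) : bool :=
  (q != [::]) &&
  (count_mem (last 0 q) q == k) &&
  all (fun x => (x == last 0 q) || (count_mem x q <= 1)) q.

Definition D (k n : nat) : nat :=
  #|[set zt : 'I_k.+1 * n.-tuple 'I_n.+1 |
       is_ptn zt.2 && D_pred k (parts_of zt.2 ++ nseq zt.1 0)]|.

Definition A (k n : nat) : rat :=
  ((P1 n + P' k n + P2 n + P'' k n)%:R / 2)%R.

From mathcomp Require Import all_boot all_order all_algebra.
From mathcomp Require Import zify.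
Set Implicit Arguments. Unset Strict Implicit. Unset Printing Implicit Defensive.

(* A partition counted by D_k(n+1) either contains the part 0, and then
   dropping its k zeros leaves a partition of n+1 into distinct parts, or its
   smallest part occurs exactly k times and every other part once.  Splitting
   both classes according to whether 1 is a part gives four classes, matched
   bijectively with the partitions of n counted by P_1, P_2, P'_{k-1} and
   P''_{k-1}: remove one part 1 (distinct parts with a 1 -> P_1, smallest
   part 1 repeated -> P'), or lower one copy of the smallest part b > 1 to
   b - 1 (distinct parts -> P_2, repeated -> P''). *)

Lemma card_in_bij (T T' : finType) (A : {set T}) (B : {set T'})
    (f : T -> T') (g : T' -> T) :
  {in A, forall x, f x \in B} -> {in B, forall y, g y \in A} ->
  {in A, cancel f g} -> {in B, cancel g f} -> #|A| = #|B|.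
Proof.
move=> fAB gBA fK gK; rewrite -(card_in_imset (can_in_inj fK)).
apply: eq_card => y; apply/imsetP/idP => [[x /fAB yB ->] // | yB].
by exists (g y); [exact: gBA | rewrite gK].
Qed.

Lemma card_set_sum (T : finType) (b : pred T) : #|[set x | b x]| = \sum_x b x.
Proof. by rewrite -sum1dep_card big_mkcond; apply: eq_bigr => x _; case: (b x). Qed.

Lemma sumn_filter_pos s : sumn [seq x <- s | 0 < x] = sumn s.
Proof. by elim: s => //= -[|x] s IH; rewrite /= IH. Qed.

Lemma leq_size_sumn s : all (leq 1) s -> size s <= sumn s.
Proof. by elim: s => //= x s IH /andP[x_pos /IH]; rewrite -add1n; apply: leq_add. Qed.

Lemma leq_mem_sumn s x : x \in s -> x <= sumn s.
Proof.
elim: s => //= y s IH; rewrite inE => /predU1P[-> | /IH x_le]; first exact: leq_addr.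
exact: leq_trans x_le (leq_addl _ _).
Qed.

Lemma sorted_geq_pos_zeros (s : seq nat) :
  sorted geq s -> s = [seq x <- s | 0 < x] ++ nseq (count_mem 0 s) 0.
Proof.
elim: s => //= -[|x] s IH s_sorted /=; last first.
  by rewrite add0n [s in LHS]IH // (path_sorted s_sorted).
have s0 : all (pred1 0) s.
  by apply: sub_all (order_path_min (rev_trans leq_trans) s_sorted) => y; rewrite /= leqn0.
by move/all_pred1P: s0 => ->; rewrite count_nseq filter_nseq /= mul1n.
Qed.

Lemma uniq_sorted_leq r : sorted leq r -> uniq r = sorted ltn r.
Proof. by move=> r_sorted; rewrite ltn_sorted_uniq_leq r_sorted andbT. Qed.

Lemma sorted_leq_mem_head a r : sorted leq (a :: r) -> a \in r -> r = a :: behead r.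
Proof.
case: r => //= b r /andP[a_le_b b_r]; rewrite inE => /predU1P[<- // | a_in].
suff -> : a = b by [].
by apply/eqP; rewrite eqn_leq a_le_b (allP (order_path_min leq_trans b_r)).
Qed.

Lemma head_undup_sorted r : sorted leq r -> head 0 (undup r) = head 0 r.
Proof.
elim: r => //= a r IH a_r; case: ifP => // a_in.
by rewrite IH ?(path_sorted a_r) // [in LHS](sorted_leq_mem_head a_r a_in).
Qed.

Lemma rev_undup_rev r : sorted leq r -> rev (undup (rev r)) = undup r.
Proof.
move=> r_sorted; apply: (sorted_eq leq_trans anti_leq).
- rewrite rev_sorted; apply: (subseq_sorted _ (undup_subseq (rev r))).
    exact: rev_trans leq_trans.
  by rewrite rev_sorted.
- exact: (subseq_sorted leq_trans (undup_subseq r) r_sorted).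
- by apply: uniq_perm; rewrite ?rev_uniq ?undup_uniq // => x; rewrite mem_rev !mem_undup mem_rev.
Qed.

Lemma count_mem_head_eq1 (a : nat) r : (count_mem a (a :: r) == 1) = (a \notin r).
Proof. by rewrite /= eqxx add1n eqSS eqn0Ngt -has_count has_pred1. Qed.

Definition is_ptn_seq n (p : seq nat) : bool :=
  [&& sorted geq p, all (leq 1) p & sumn p == n].

Lemma is_ptn_seq_rev n r :
  is_ptn_seq n (rev r) = [&& sorted leq r, all (leq 1) r & sumn r == n].
Proof. by rewrite /is_ptn_seq rev_sorted all_rev sumn_rev. Qed.

Section Encoding.

Variable n : nat.
Implicit Types (p : seq nat) (t : n.-tuple 'I_n.+1).

Definition tuple_of_parts p : n.-tuple 'I_n.+1 :=
  [tuple inord (nth 0 p i) | i < n].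

Lemma parts_ofE t : parts_of t = [seq x <- map val t | 0 < x].
Proof. by rewrite filter_map. Qed.

Lemma parts_of_pos t : all (leq 1) (parts_of t).
Proof. by rewrite parts_ofE filter_all. Qed.

Lemma is_ptn_seq_parts t : is_ptn t -> is_ptn_seq n (parts_of t).
Proof.
case/andP=> t_sorted t_sum; rewrite /is_ptn_seq parts_of_pos parts_ofE sumn_filter_pos.
by rewrite sorted_filter //; exact: rev_trans leq_trans.
Qed.

Lemma map_val_ptn t : is_ptn t ->
  map val t = parts_of t ++ nseq (n - size (parts_of t)) 0.
Proof.
case/andP=> t_sorted _; rewrite parts_ofE [in LHS](sorted_geq_pos_zeros t_sorted).
congr (_ ++ nseq _ 0).
have := congr1 size (sorted_geq_pos_zeros t_sorted).
rewrite size_cat size_nseq size_map size_tuple; lia.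
Qed.

Lemma map_val_tuple_of_parts p : is_ptn_seq n p ->
  map val (tuple_of_parts p) = p ++ nseq (n - size p) 0.
Proof.
case/and3P=> _ p_pos /eqP p_sum.
have size_p : size p <= n by rewrite -p_sum leq_size_sumn.
apply: (@eq_from_nth _ 0); first by rewrite size_map size_tuple size_cat size_nseq subnKC.
move=> i; rewrite size_map size_tuple => lt_in.
rewrite (nth_map ord0) ?size_tuple //.
have -> : nth ord0 (tuple_of_parts p) i = tnth (tuple_of_parts p) (Ordinal lt_in).
  by rewrite (tnth_nth ord0).
rewrite tnth_mktuple nth_cat /=; case: ltnP => [i_lt | i_ge].
  by rewrite inordK // ltnS -p_sum leq_mem_sumn // mem_nth.
by rewrite nth_default // nth_nseq if_same inordK.
Qed.

Lemma parts_of_tuple p : is_ptn_seq n p -> parts_of (tuple_of_parts p) = p.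
Proof.
move=> p_ptn; rewrite parts_ofE map_val_tuple_of_parts // filter_cat filter_nseq mul0n cats0.
by case/and3P: p_ptn => _ /all_filterP.
Qed.

Lemma is_ptn_tuple_of_parts p : is_ptn_seq n p -> is_ptn (tuple_of_parts p).
Proof.
move=> p_ptn; rewrite /is_ptn map_val_tuple_of_parts //.
case/and3P: p_ptn => p_sorted _ /eqP p_sum.
rewrite sumn_cat sumn_nseq mul0n addn0 p_sum eqxx andbT.
have path_zeros y m : path geq y (nseq m 0) by elim: m y => //= m IH y; rewrite IH.
case: p p_sorted {p_sum} => [|x p] /=; last by rewrite cat_path path_zeros => ->.
by case: (n - 0) => //= m _; apply: path_zeros.
Qed.

Lemma tuple_of_partsK t : is_ptn t -> tuple_of_parts (parts_of t) = t.
Proof.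
move=> t_ptn; apply/val_inj/(inj_map val_inj).
by rewrite map_val_tuple_of_parts ?is_ptn_seq_parts // map_val_ptn.
Qed.

End Encoding.

Definition ptn_set n (P : pred (seq nat)) : {set n.-tuple 'I_n.+1} :=
  [set t | is_ptn t && P (parts_of t)].

(* A partition is represented here by its nondecreasing list of parts [r]
   (the reverse of [parts_of]), so that the bijections below act on the
   smallest part, at the head of [r]. *)
Definition asc_ptn n (P : pred (seq nat)) : pred (seq nat) :=
  [pred r | is_ptn_seq n (rev r) && P (rev r)].

Lemma ptn_set_asc n P t : t \in ptn_set n P -> rev (parts_of t) \in asc_ptn n P.
Proof. by rewrite !inE revK => /andP[/is_ptn_seq_parts -> ->]. Qed.

Lemma asc_ptn_set n P r :
  r \in asc_ptn n P -> tuple_of_parts n (rev r) \in ptn_set n P.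
Proof.
by rewrite !inE => /andP[r_ptn Pr]; rewrite is_ptn_tuple_of_parts // parts_of_tuple.
Qed.

Lemma rev_parts_of_tuple n P r :
  r \in asc_ptn n P -> rev (parts_of (tuple_of_parts n (rev r))) = r.
Proof. by rewrite inE => /andP[r_ptn _]; rewrite parts_of_tuple ?revK. Qed.

Lemma ptn_count_bij n m P Q (f g : seq nat -> seq nat) :
  {in asc_ptn n P, forall r, f r \in asc_ptn m Q} ->
  {in asc_ptn m Q, forall r, g r \in asc_ptn n P} ->
  {in asc_ptn n P, cancel f g} -> {in asc_ptn m Q, cancel g f} ->
  ptn_count n P = ptn_count m Q.
Proof.
move=> fPQ gQP fK gK.
pose F (t : n.-tuple 'I_n.+1) := tuple_of_parts m (rev (f (rev (parts_of t)))).
pose G (u : m.-tuple 'I_m.+1) := tuple_of_parts n (rev (g (rev (parts_of u)))).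
apply: (@card_in_bij _ _ (ptn_set n P) (ptn_set m Q) F G).
- by move=> t /ptn_set_asc/fPQ/asc_ptn_set.
- by move=> u /ptn_set_asc/gQP/asc_ptn_set.
- move=> t t_in; have r_in := ptn_set_asc t_in.
  rewrite /G /F (rev_parts_of_tuple (fPQ _ r_in)) fK // revK tuple_of_partsK //.
  by move: t_in; rewrite inE => /andP[].
- move=> u u_in; have r_in := ptn_set_asc u_in.
  rewrite /G /F (rev_parts_of_tuple (gQP _ r_in)) gK // revK tuple_of_partsK //.
  by move: u_in; rewrite inE => /andP[].
Qed.

Lemma asc_ptnE n P r : (r \in asc_ptn n P) =
  [&& sorted leq r, all (leq 1) r, sumn r == n & P (rev r)].
Proof. by rewrite inE is_ptn_seq_rev -!andbA. Qed.

Lemma ptn_count_predI N (P c : pred (seq nat)) :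
  ptn_count N P = ptn_count N (fun p => P p && c p) + ptn_count N (fun p => P p && ~~ c p).
Proof.
rewrite /ptn_count -(cardID [set t : N.-tuple 'I_N.+1 | c (parts_of t)]).
by congr (_ + _); apply: eq_card => t; rewrite !inE; case: (c _); rewrite ?andbT ?andbF.
Qed.

Definition distinct_except (a : nat) (r : seq nat) : bool :=
  all (fun x => (x == a) || (count_mem x r <= 1)) r.

Lemma distinct_except_rev a r : distinct_except a (rev r) = distinct_except a r.
Proof. by rewrite /distinct_except all_rev; apply: eq_all => x; rewrite count_rev. Qed.

Lemma distinct_except_cons_eq a r : distinct_except a (a :: r) = distinct_except a r.
Proof.
rewrite /distinct_except /= eqxx /=; apply: eq_all => x /=.
by case: eqVneq => //= /negbTE; rewrite eq_sym => ->.
Qed.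

Lemma distinct_except_cons a b r : b != a ->
  distinct_except a (b :: r) = (b \notin r) && distinct_except a r.
Proof.
rewrite /distinct_except /= => /negbTE ->.
rewrite eqxx add1n ltnS leqn0 eqn0Ngt -has_count has_pred1 /=.
case: (boolP (b \in r)) => //= b_notin; apply: eq_in_all => x x_in /=.
by rewrite (_ : (b == x) = false) //; apply: contraNF b_notin => /eqP ->.
Qed.

Lemma distinct_except_uniq a p : a \notin p -> distinct_except a p = uniq p.
Proof.
elim: p => //= b p IH; rewrite inE negb_or eq_sym => /andP[b_neq a_notin].
by rewrite distinct_except_cons // IH.
Qed.

Lemma distinct_except_cat_nseq a p z :
  distinct_except a (p ++ nseq z a) = distinct_except a p.
Proof.
rewrite -distinct_except_rev rev_cat rev_nseq -[RHS]distinct_except_rev.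
by elim: z => //= z IH; rewrite distinct_except_cons_eq.
Qed.

Lemma sorted_cons1 r : all (leq 1) r -> sorted leq r -> sorted leq (1 :: r).
Proof. by move=> r_pos r_sorted; rewrite /= path_sortedE ?r_pos //; exact: leq_trans. Qed.

Lemma mem1_sorted_pos r : sorted leq r -> all (leq 1) r -> (1 \in r) = (head 0 r == 1).
Proof.
case: r => [|a r] //= r_sorted /andP[a_pos _]; rewrite inE eq_sym.
case: eqP => //= a_neq1; apply/negP => /(allP (order_path_min leq_trans r_sorted)).
by rewrite /=; lia.
Qed.

Lemma P1_pred_rev r : sorted leq r -> P1_pred (rev r) = path ltn 1 r.
Proof.
move=> r_sorted; rewrite /P1_pred rev_uniq all_rev uniq_sorted_leq //.
by rewrite path_sortedE 1?andbC //; exact: ltn_trans.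
Qed.

Lemma P2_pred_rev r : sorted leq r ->
  P2_pred (rev r) = if r is a :: s then path ltn a.+1 s else true.
Proof.
move=> r_sorted; rewrite /P2_pred rev_uniq revK uniq_sorted_leq //.
by case: r {r_sorted} => [|a [|b s]] //=; rewrite andbAC; congr (_ && _); lia.
Qed.

Lemma D_pred_rev k r : D_pred k (rev r) =
  if r is a :: _ then (count_mem a r == k) && distinct_except a r else false.
Proof.
case: r => [|a r] //; rewrite /D_pred -/(distinct_except _ _) distinct_except_rev count_rev.
by rewrite rev_cons last_rcons -size_eq0 size_rcons.
Qed.

Lemma P'_pred_rev k r :
  P'_pred k (rev r) = (count_mem 1 r == k.-1) && distinct_except 1 r.
Proof. by rewrite /P'_pred -/(distinct_except _ _) distinct_except_rev count_rev. Qed.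

Lemma P''_pred_rev k r : sorted leq r ->
  P''_pred k (rev r) = if r is a :: b :: _ then
    [&& b == a.+1, count_mem a r == 1, count_mem b r == k.-1 & distinct_except b r]
  else false.
Proof.
move=> r_sorted; rewrite /P''_pred rev_undup_rev //.
case: r r_sorted => [|a r] // a_r; have r_sorted := path_sorted a_r.
have head_r := head_undup_sorted r_sorted; rewrite [undup _]/=.
case: ifPn => [a_in | a_notin].
  transitivity false.
    have head_a : head 0 (undup r) = a by rewrite head_r (sorted_leq_mem_head a_r a_in).
    case: (undup r) head_a => [|s1 [|s2 t]] //= ->.
    by rewrite count_rev count_mem_head_eq1 a_in andbF.
  by case: r a_in {a_r r_sorted head_r} => // b r a_in; rewrite count_mem_head_eq1 a_in andbF.
case: r a_notin {a_r} r_sorted head_r => // b r a_notin _.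
have : b \in undup (b :: r) by rewrite mem_undup mem_head.
case: (undup (b :: r)) => [|b' t] //= _ ->.
by rewrite !count_rev -/(distinct_except b (rev _)) distinct_except_rev addn1 -!andbA.
Qed.

Lemma ptn_count_P1 n :
  ptn_count n P1_pred = ptn_count n.+1 (fun p => uniq p && (1 \in p)).
Proof.
apply: (ptn_count_bij (f := cons 1) (g := behead)) => [r | r | r _ // | r].
- rewrite !asc_ptnE rev_uniq mem_rev => /and4P[r_sorted r_pos /eqP r_sum].
  rewrite P1_pred_rev // => r_gt1; have r1_sorted := sorted_cons1 r_pos r_sorted.
  by rewrite (uniq_sorted_leq r1_sorted) r1_sorted /= r_pos r_sum add1n r_gt1 inE !eqxx.
- rewrite !asc_ptnE rev_uniq mem_rev => /and4P[r_sorted r_pos /eqP r_sum /andP[r_uniq]].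
  rewrite mem1_sorted_pos // uniq_sorted_leq // in r_uniq *.
  case: r r_sorted r_pos r_sum r_uniq => // a r r_sorted /= /andP[_ r_pos] r_sum r_lt /eqP a1.
  subst a; rewrite (path_sorted r_sorted) r_pos P1_pred_rev ?(path_sorted r_sorted) //=.
  by rewrite r_lt andbT; move: r_sum; rewrite add1n => -[->].
- rewrite asc_ptnE rev_uniq mem_rev => /and4P[r_sorted r_pos _ /andP[_]].
  by rewrite mem1_sorted_pos //; case: r {r_sorted r_pos} => //= a r /eqP ->.
Qed.

Definition decr_head (r : seq nat) : seq nat :=
  if r is a :: s then a.-1 :: s else r.

Lemma ptn_count_P2 n : 0 < n ->
  ptn_count n P2_pred = ptn_count n.+1 (fun p => uniq p && (1 \notin p)).
Proof.
case: n => // n _.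
apply: (ptn_count_bij (f := incr_nth^~ 0) (g := decr_head)) => -[|a s] //.
- rewrite !asc_ptnE rev_uniq mem_rev => /and4P[a_s a_s_pos /eqP sum_as].
  rewrite P2_pred_rev // => a_lt_s.
  rewrite /= in a_s_pos sum_as; case/andP: a_s_pos => a_pos s_pos.
  have as_sorted : sorted leq (a.+1 :: s) by rewrite /= (sub_path ltnW).
  rewrite as_sorted (uniq_sorted_leq as_sorted) mem1_sorted_pos /= ?s_pos //.
  by rewrite addSn sum_as eqxx a_lt_s eqSS -lt0n a_pos.
- rewrite !asc_ptnE rev_uniq mem_rev => /and4P[a_s a_s_pos /eqP sum_as /andP[]].
  rewrite mem1_sorted_pos // (uniq_sorted_leq a_s) /= => a_lt_s a_neq1.
  rewrite /= in a_s_pos sum_as; case/andP: a_s_pos => a_pos s_pos.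
  have a's_sorted : path leq a.-1 s := path_le leq_trans (leq_pred a) a_s.
  rewrite a's_sorted P2_pred_rev // prednK // a_lt_s s_pos andbT.
  apply/andP; split; lia.
- by rewrite asc_ptnE => /and4P[_ /= /andP[a_pos _] _ _]; rewrite prednK.
Qed.

Lemma ptn_count_P' k n : 0 < k ->
  P' k n = ptn_count n.+1 (fun p => D_pred k p && (1 \in p)).
Proof.
move=> k_gt0; apply: (ptn_count_bij (f := cons 1) (g := behead)) => [r | r | r _ // | r].
- rewrite !asc_ptnE P'_pred_rev D_pred_rev mem_rev => /and4P[r_sorted r_pos /eqP r_sum].
  case/andP=> /eqP count1 dist1; rewrite sorted_cons1 //= r_pos r_sum add1n eqxx.
  by rewrite count1 add1n prednK // distinct_except_cons_eq dist1 inE eqxx.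
- rewrite !asc_ptnE D_pred_rev mem_rev => /and4P[r_sorted r_pos /eqP r_sum /andP[]].
  rewrite mem1_sorted_pos //; case: r r_sorted r_pos r_sum => // a r a_r.
  move=> /= /andP[_ r_pos] r_sum /andP[count_a dist_a] /eqP a1; subst a.
  rewrite (path_sorted a_r) r_pos P'_pred_rev -distinct_except_cons_eq dist_a.
  by move: r_sum count_a => /=; rewrite !add1n => -[->] /eqP <-; rewrite !eqxx.
- rewrite asc_ptnE mem_rev => /and4P[r_sorted r_pos _ /andP[_]].
  by rewrite mem1_sorted_pos //; case: r {r_sorted r_pos} => //= a r /eqP ->.
Qed.

Lemma ptn_count_P'' k n : 1 < k ->
  P'' k n = ptn_count n.+1 (fun p => D_pred k p && (1 \notin p)).
Proof.
move=> k_gt1; apply: (ptn_count_bij (f := incr_nth^~ 0) (g := decr_head)) => [r | r | r | r].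
- rewrite !asc_ptnE D_pred_rev mem_rev => /and4P[r_sorted r_pos /eqP r_sum].
  rewrite P''_pred_rev //; case: r r_sorted r_pos r_sum => [|a [|b s]] // a_b_s ab_pos ab_sum.
  case/and4P=> /eqP b_eq _ count_b dist_b; subst b.
  have aa_s : sorted leq [:: a.+1, a.+1 & s] by rewrite /= leqnn; case/andP: a_b_s.
  have a_neq : a != a.+1 by rewrite ltn_eqF.
  rewrite /= in ab_pos ab_sum count_b; case/andP: ab_pos => a_pos s_pos.
  rewrite (negbTE a_neq) eqxx add0n add1n in count_b.
  rewrite (distinct_except_cons _ a_neq) in dist_b; case/andP: dist_b => _ dist_b.
  rewrite aa_s mem1_sorted_pos //= ?s_pos // !eqxx !add1n distinct_except_cons_eq dist_b andbT.
  lia.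
- rewrite !asc_ptnE D_pred_rev mem_rev => /and4P[r_sorted r_pos /eqP r_sum].
  case: r r_sorted r_pos r_sum => // c t c_t c_t_pos c_t_sum /andP[/andP[count_c dist_c]].
  rewrite mem1_sorted_pos //= => c_neq1.
  have c_gt1 : 1 < c by case/andP: c_t_pos; lia.
  have c_in : c \in t by rewrite -has_pred1 has_count; move: count_c => /=; rewrite eqxx; lia.
  have := sorted_leq_mem_head c_t c_in.
  case: t c_t c_t_pos c_t_sum count_c dist_c {c_in} => // c' s c_s c_s_pos c_s_sum count_c.
  rewrite distinct_except_cons_eq => dist_c [c'_eq]; subst c'.
  have c'_notin : c.-1 \notin c :: s.
    by apply/negP => /(allP (order_path_min leq_trans c_s)); lia.
  have c'_neq : c.-1 != c by lia.
  have c'_s : path leq c.-1 (c :: s) := path_le leq_trans (leq_pred c) c_s.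
  rewrite (@P''_pred_rev _ [:: c.-1, c & s] c'_s) count_mem_head_eq1 c'_notin.
  rewrite (distinct_except_cons _ c'_neq) c'_notin.
  rewrite c'_s dist_c andbT; move: c_s_pos c_s_sum count_c => /= /and3P[_ _ ->] /=.
  rewrite !eqxx (negbTE c'_neq); lia.
- by case: r => //; rewrite asc_ptnE andbF.
- rewrite asc_ptnE; case: r => // c t /and4P[_ /andP[c_pos _] _ _] /=.
  by rewrite prednK.
Qed.

Lemma D_pred_cat_zeros k p z : all (leq 1) p -> 0 < z ->
  D_pred k (p ++ nseq z 0) = (z == k) && uniq p.
Proof.
move=> p_pos z_gt0; have zero_notin : 0 \notin p by apply/negP => /(allP p_pos).
have last_zeros : last 0 (p ++ nseq z 0) = 0.
  by case: z z_gt0 => // z _; rewrite last_cat /=; elim: z.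
rewrite /D_pred -/(distinct_except _ _) last_zeros distinct_except_cat_nseq.
rewrite distinct_except_uniq // count_cat (count_memPn zero_notin) count_nseq /= mul1n.
by rewrite -size_eq0 size_cat size_nseq addn_eq0 (gtn_eqF z_gt0) andbF add0n.
Qed.

Lemma D_split k N : 0 < k -> D k N = ptn_count N (D_pred k) + ptn_count N uniq.
Proof.
case: k => // k _; rewrite /D /ptn_count !card_set_sum.
rewrite -(pair_big xpredT xpredT (fun (z : 'I_k.+2) (t : N.-tuple 'I_N.+1) =>
  (is_ptn t && D_pred k.+1 (parts_of t ++ nseq z 0) : nat))) /=.
rewrite big_ord_recl big_ord_recr [X in _ + (X + _)]big1 ?add0n => [|i _]; last first.
  by apply: big1 => t _; rewrite D_pred_cat_zeros ?parts_of_pos //= eqSS ltn_eqF ?andbF.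
congr (_ + _); apply: eq_bigr => t _; first by rewrite cats0.
by rewrite D_pred_cat_zeros ?parts_of_pos //= eqxx.
Qed.

Theorem theorem4 (k n : nat) : 2 <= k -> 1 <= n ->
  A k n = ((D k n.+1)%:R / 2 : rat)%R.
Proof.
move=> k_gt1 n_gt0; rewrite /A; congr (_%:R / 2)%R.
rewrite (D_split _ (ltnW k_gt1)) (ptn_count_predI _ (D_pred k) (fun p => 1 \in p)).
rewrite (ptn_count_predI _ uniq (fun p => 1 \in p)).
rewrite /P1 /P2 ptn_count_P1 ptn_count_P2 // ptn_count_P' ?(ltnW k_gt1) // ptn_count_P'' //.
lia.
Qed.
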